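(* Let $(V,g)$ be a Euclidean vector space and $\mathfrak{g}\subseteq\mathfrak{so}(V)$ a Lie subalgebra such that the map $\varepsilon^{\perp}:\Lambda^3V\to\Lambda^1V\otimes\mathfrak{g}^{\perp}$, $\varepsilon^\perp(T)_X=(X\lrcorner T)_{\mathfrak{g}^{\perp}}$, is surjective. Then the representation $(\mathfrak{g},V)$ is irreducible.
   Context: $\Lambda^2V$ is identified with $\mathfrak{so}(V)$ via $F\mapsto g(F\cdot,\cdot)$; $\mathfrak{g}^\perp$ is the orthogonal complement of $\mathfrak{g}$ in $\Lambda^2V$, and $(\cdot)_{\mathfrak{g}^\perp}$ the orthogonal projection onto it. *)

(* V = R^n (row vectors 'rV[R]_n) with the standard inner
   product, over a real closed field R (e.g. the reals).  so(V) = skew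
   n x n matrices; Lambda^2 V is identified with so(V). *)
From HB Require Import structures.
From mathcomp Require Import all_boot all_order all_algebra.
Set Implicit Arguments. Unset Strict Implicit. Unset Printing Implicit Defensive.
Import Order.TTheory GRing.Theory Num.Theory.
Local Open Scope ring_scope.

Section Defs.
Variables (R : rcfType) (n : nat).

Definition skew (A : 'M[R]_n) : Prop := A^T = - A.

(* Frobenius inner product on matrices (proportional to the induced inner
   product on Lambda^2 V, so orthogonality is the same). *)
Definition frob (A B : 'M[R]_n) : R := \sum_(i < n) \sum_(j < n) A i j * B i j.

Definition lie_subalgebra (g : 'M[R]_n -> Prop) : Prop :=
  [/\ forall A, g A -> skew A,
      g 0,
      forall (a : R) A B, g A -> g B -> g (a *: A + B)
    & forall A B, g A -> g B -> g (A *m B - B *m A)].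

Definition gperp (g : 'M[R]_n -> Prop) (B : 'M[R]_n) : Prop :=
  skew B /\ forall A, g A -> frob A B = 0.

(* B is the orthogonal projection of M onto g^perp:
   B in g^perp and M - B in g (M = (M - B) + B, orthogonal decomposition). *)
Definition is_proj_gperp (g : 'M[R]_n -> Prop) (M B : 'M[R]_n) : Prop :=
  gperp g B /\ g (M - B).

(* Lambda^3 V : alternating trilinear forms, given by their values on the
   standard basis. *)
Definition alt3 (T : 'I_n -> 'I_n -> 'I_n -> R) : Prop :=
  (forall i j k, T i j k = - T j i k) /\ (forall i j k, T i j k = - T i k j).

Definition contr (T : 'I_n -> 'I_n -> 'I_n -> R) (i : 'I_n) : 'M[R]_n :=
  \matrix_(j, k) T i j k.

(* eps^perp : Lambda^3 V -> Lambda^1 V (x) g^perp is surjective.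
   An element of Lambda^1 V (x) g^perp = Hom(V, g^perp) is given by its values
   A i on the basis vectors e_i. *)
Definition eps_perp_surjective (g : 'M[R]_n -> Prop) : Prop :=
  forall A : 'I_n -> 'M[R]_n, (forall i, gperp g (A i)) ->
    exists T, alt3 T /\ forall i, is_proj_gperp g (contr T i) (A i).

(* subspace U (row space of U) of V invariant under g acting by v |-> A v *)
Definition g_invariant (g : 'M[R]_n -> Prop) (U : 'M[R]_n) : Prop :=
  forall A, g A -> (U *m A^T <= U)%MS.

(* (g, V) is irreducible: only the trivial invariant subspaces (V <> 0 is
   imposed separately) *)
Definition irreducible_rep (g : 'M[R]_n -> Prop) : Prop :=
  forall U : 'M[R]_n, g_invariant g U -> (U == (0 : 'M[R]_n))%MS \/ (U == (1%:M : 'M[R]_n))%MS.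

End Defs.

From Pilot Require Import Defs.
From HB Require Import structures.
From mathcomp Require Import all_boot all_order all_algebra.
Set Implicit Arguments. Unset Strict Implicit. Unset Printing Implicit Defensive.
Import Order.TTheory GRing.Theory Num.Theory.
Local Open Scope ring_scope.

(* Suppose U is a g-invariant subspace of V other
   than 0 and V.  Pick u in U and w in U^perp, both nonzero.  Invariance and
   skewness of g give g(A u, w) = g(A w, u) = 0 for A in g, so the bivector
   B = w /\ u is orthogonal to g, i.e. B lies in g^perp.  The element
   X |-> g(u, X) B of Lambda^1 V (x) g^perp is, by surjectivity of eps^perp,
   the image of some T in Lambda^3 V: (e_a _| T) - u_a B lies in g for each a.
   Pairing with (w, u), which annihilates g, yields
     T(u, w, u) = sum_a u_a T(e_a, w, u) = |u|^2 B(w, u) = |u|^4 |w|^2,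
   whereas T(u, w, u) = 0 because T is alternating.  Contradiction. *)

Section EuclideanSpace.
Variables (R : rcfType) (n : nat).
Implicit Types (x y u w : 'rV[R]_n) (M A : 'M[R]_n).

Definition bilin M x y : R := (x *m M *m y^T) 0 0.

Lemma bilinE M x y : bilin M x y = \sum_i \sum_j x 0 i * M i j * y 0 j.
Proof.
rewrite /bilin !mxE; under eq_bigr => j _ do rewrite !mxE big_distrl /=.
rewrite exchange_big /=; apply: eq_bigr => i _; apply: eq_bigr => j _.
by rewrite ?mxE.
Qed.

Lemma bilin_tr M x y : bilin M^T y x = bilin M x y.
Proof.
rewrite /bilin; transitivity ((x *m M *m y^T)^T 0 0); last by rewrite mxE.
by rewrite !trmx_mul !trmxK mulmxA.
Qed.

Lemma bilin_subZ M A (c : R) x y :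
  bilin (M - c *: A) x y = bilin M x y - c * bilin A x y.
Proof.
rewrite /bilin mulmxBr mulmxBl -scalemxAr -scalemxAl -scaleNr [LHS]mxE.
by rewrite [X in _ + X]mxE mulNr.
Qed.

Lemma norm2_gt0 x : x != 0 -> 0 < (x *m x^T) 0 0.
Proof.
move=> x0; have [i xi] : exists i, x 0 i != 0.
  apply/existsP; apply: contraR x0; rewrite negb_exists => /forallP xi0.
  by apply/eqP/rowP => i; rewrite mxE; apply/eqP/negbNE/xi0.
rewrite mxE (bigD1 i) //= !mxE; apply: ltr_pwDl.
  by rewrite -expr2 exprn_even_gt0.
by apply: sumr_ge0 => j _; rewrite mxE -expr2 sqr_ge0.
Qed.

Definition wedge (w u : 'rV[R]_n) : 'M[R]_n := w^T *m u - u^T *m w.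

Lemma wedge_skew w u : Defs.skew (wedge w u).
Proof. by rewrite /Defs.skew /wedge linearB /= !trmx_mul !trmxK opprB. Qed.

Lemma frob_wedge A w u : frob A (wedge w u) = bilin A w u - bilin A u w.
Proof.
rewrite !bilinE /frob -sumrB; apply: eq_bigr => a _; rewrite -sumrB.
apply: eq_bigr => b _; rewrite !mxE !big_ord1 !mxE mulrBr.
by congr (_ - _); rewrite mulrCA mulrA // mulrAC.
Qed.

Lemma bilin_wedge w u : w *m u^T = 0 ->
  bilin (wedge w u) w u = (w *m w^T) 0 0 * (u *m u^T) 0 0.
Proof.
move=> wu; rewrite /bilin /wedge mulmxBr mulmxBl (mulmxA w u^T) wu !mul0mx.
by rewrite subr0 !mulmxA -(mulmxA (w *m w^T)) mxE big_ord1.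
Qed.

(* For alternating T, T(u, w, u) = sum_a u_a (e_a _| T)(w, u) vanishes. *)
Lemma alt3_diag0 T u w : alt3 T -> \sum_a u 0 a * bilin (contr T a) w u = 0.
Proof.
case=> alt12 alt23; set S := (X in X = 0).
pose F a b c := u 0 a * (w 0 b * T a b c * u 0 c).
have SE : S = \sum_a \sum_b \sum_c F a b c.
  apply: eq_bigr => a _; rewrite bilinE mulr_sumr.
  by apply: eq_bigr => b _; rewrite mulr_sumr; apply: eq_bigr => c _; rewrite mxE.
have F_anti a b c : F c b a = - F a b c.
  rewrite /F (alt12 c b a) (alt23 b c a) (alt12 b a c) !opprK mulrN mulNr.
  by rewrite mulrN; congr (- _); rewrite mulrCA [RHS]mulrCA [u 0 c * _]mulrC.
have SN : S = - S.
  rewrite {1}SE exchange_big /=; under eq_bigr => b _ do rewrite exchange_big /=.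
  rewrite exchange_big /= SE -!sumrN; apply: eq_bigr => a _; rewrite -sumrN.
  by apply: eq_bigr => b _; rewrite -sumrN; apply: eq_bigr => c _; rewrite F_anti.
by apply/eqP; have := mulrn_eq0 S 2; rewrite mulr2n {2}SN subrr eqxx /= => <-.
Qed.

Lemma gperp_scale (g : 'M[R]_n -> Prop) (c : R) B : gperp g B -> gperp g (c *: B).
Proof.
case=> skB orthB; split; first by rewrite /Defs.skew linearZ /= skB scalerN.
move=> A gA; rewrite /frob.
under eq_bigr => i _ do under eq_bigr => j _ do rewrite mxE mulrCA.
under eq_bigr => i _ do rewrite -mulr_sumr.
by rewrite -mulr_sumr -/(frob A B) orthB // mulr0.
Qed.

Section InvariantPair.
Variables (g : 'M[R]_n -> Prop) (U : 'M[R]_n) (u w : 'rV[R]_n).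
Hypotheses (gskew : forall A, g A -> Defs.skew A) (Uinv : g_invariant g U).
Hypotheses (uU : (u <= U)%MS) (Uw : U *m w^T = 0).

(* A u stays in U, hence is orthogonal to w: A(w, u) = 0 for A in g. *)
Lemma invariant_pair_wu A : g A -> bilin A w u = 0.
Proof.
move=> gA; rewrite -bilin_tr /bilin.
have /submxP [y ->] : (u *m A^T <= U)%MS := submx_trans (submxMr _ uU) (Uinv gA).
by rewrite -mulmxA Uw mulmx0 mxE.
Qed.

(* By skewness, also A(u, w) = - A^T(u, w) = - A(w, u) = 0. *)
Lemma invariant_pair_uw A : g A -> bilin A u w = 0.
Proof.
move=> gA; have /eqP : A^T = - A := gskew gA.
rewrite -eqr_oppLR => /eqP <-; rewrite /bilin mulmxN mulNmx mxE.
by rewrite -/(bilin A^T u w) bilin_tr invariant_pair_wu // oppr0.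
Qed.

Lemma invariant_pair_gperp : gperp g (wedge w u).
Proof.
split=> [|A gA]; first exact: wedge_skew.
by rewrite frob_wedge invariant_pair_wu // invariant_pair_uw // subrr.
Qed.

End InvariantPair.

Lemma proper_subspace_pair (U : 'M[R]_n) :
  ~~ (U == (0 : 'M[R]_n))%MS -> ~~ (U == (1%:M : 'M[R]_n))%MS ->
  exists u w, [/\ (u <= U)%MS, u != 0, w != 0 & U *m w^T = 0].
Proof.
have nz_row m (M : 'M[R]_(m, n)) : M != 0 -> exists i, row i M != 0.
  move=> M0; apply/existsP; apply: contraR M0; rewrite negb_exists => /forallP Mi.
  by apply/eqP/row_matrixP => i; rewrite row0; apply/eqP/negbNE/Mi.
move=> U0 U1; have [i ui] : exists i, row i U != 0.
  by apply: nz_row; apply: contra U0 => /eqP->; rewrite !sub0mx.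
have K0 : kermx U^T != 0.
  rewrite -mxrank_eq0 mxrank_ker mxrank_tr subn_eq0 -ltnNge ltn_neqAle.
  rewrite rank_leq_col andbT; apply: contra U1 => rkU.
  by rewrite submx1 sub1mx.
have [k wk] := nz_row _ _ K0; exists (row i U), (row k (kermx U^T)).
split=> //; first exact: row_sub.
by apply: trmx_inj; rewrite trmx_mul trmxK trmx0 -row_mul mulmx_ker row0.
Qed.

End EuclideanSpace.

Theorem lemma8p1 (R : rcfType) (n : nat) (g : 'M[R]_n -> Prop) :
  (0 < n)%N -> lie_subalgebra g -> eps_perp_surjective g -> irreducible_rep g.
Proof.
move=> _ [gskew _ _ _] surj U Uinv.
case: (boolP (U == 0)%MS) => [|U0]; first by left.
case: (boolP (U == 1%:M)%MS) => [|U1]; first by right.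
exfalso; have [u [w [uU u0 w0 Uw]]] := proper_subspace_pair U0 U1.
have wu : w *m u^T = 0.
  case/submxP: uU => y ->.
  by rewrite trmx_mul mulmxA -[w]trmxK -trmx_mul Uw trmx0 mul0mx.
have Bperp := invariant_pair_gperp gskew Uinv uU Uw.
have [T [altT HT]] := surj (fun a => u 0 a *: wedge w u) (fun a => gperp_scale _ Bperp).
(* Pairing (e_a _| T) - u_a (w /\ u) in g with (w, u) gives zero. *)
have contrT a : bilin (contr T a) w u = u 0 a * bilin (wedge w u) w u.
  have /eqP := invariant_pair_wu Uinv uU Uw (HT a).2.
  by rewrite bilin_subZ subr_eq0 => /eqP.
have := alt3_diag0 u w altT.
under eq_bigr => a _ do rewrite contrT mulrA.
rewrite -mulr_suml bilin_wedge // => /eqP; apply/negP.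
have uu : \sum_a u 0 a * u 0 a = (u *m u^T) 0 0.
  by rewrite mxE; apply: eq_bigr => a _; rewrite mxE.
by rewrite uu !mulf_neq0 // gt_eqF // norm2_gt0.
Qed.
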